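(* Let $w$ be a non-periodic $\mathcal{A}$-strict standard episturmian word on an alphabet $\mathcal{A}$ with $\delta(w)<\sqrt3$. Then $\mathcal{A}$ contains exactly two letters, and $w$ is a characteristic Sturmian word.
   Context: For a finite word $u$, $u^{(+)}$ denotes its right palindromic closure, the shortest palindrome having $u$ as a prefix. Given an infinite word $\Delta=\delta_1\delta_2\cdots$ on $\mathcal{A}$, the standard episturmian word with directive word $\Delta$ is the limit of the words $\pi_1=\varepsilon$, $\pi_{i+1}=(\pi_i\delta_i)^{(+)}$; it is $\mathcal{A}$-strict if every letter of $\mathcal{A}$ occurs infinitely many times in $\Delta$. For an infinite word $w$ with infinitely many palindromic prefixes (the empty word counting as one), $(n_i)_{i\ge1}$ is the increasing sequence of their lengths and $\delta(w)=\limsup n_{i+1}/n_i$. Characteristic Sturmian word on $\{a,b\}$ ($a\ne b$): for positive integers $s_1,s_2,\dots$, let $\sigma_0=a$, $\sigma_1=a^{s_1-1}b$, $\sigma_n=\sigma_{n-1}^{s_n}\sigma_{n-2}$ ($n\ge2$); the limit of the $\sigma_n$ is the characteristic Sturmian word of slope $[0;s_1,s_2,\dots]$. *)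

From Stdlib Require Import Rdefinitions.
From HB Require Import structures.
From mathcomp Require Import all_boot all_order all_algebra.
From mathcomp Require Import all_classical all_reals all_analysis.
From mathcomp Require Import Rstruct Rstruct_topology.
Set Implicit Arguments. Unset Strict Implicit. Unset Printing Implicit Defensive.
Import Order.TTheory GRing.Theory Num.Theory.

(* Infinite words over A are functions nat -> A; finite words are seq A. *)

Definition is_pal (A : eqType) (u : seq A) : bool := rev u == u.

Definition is_rpal_closure (A : eqType) (u p : seq A) : Prop :=
  is_pal p /\ prefix u p /\
  (forall q : seq A, is_pal q -> prefix u q -> size p <= size q).

Definition word_limit (A : eqType) (x : nat -> seq A) (w : nat -> A) : Prop :=
  forall m, exists N, forall n, N <= n -> m < size (x n) /\ nth (w m) (x n) m = w m.

(* w is the standard episturmian word with directive word D = d_1 d_2 ...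
   (stored 0-indexed: D 0 = d_1). *)
Definition std_episturmian (A : eqType) (D : nat -> A) (w : nat -> A) : Prop :=
  exists pi : nat -> seq A,
    pi 0 = [::] /\
    (forall i, is_rpal_closure (rcons (pi i) (D i)) (pi i.+1)) /\
    word_limit pi w.

Definition strict_directive (A : finType) (D : nat -> A) : Prop :=
  forall (a : A) (N : nat), exists n, N <= n /\ D n = a.

Definition periodic_word (A : eqType) (w : nat -> A) : Prop :=
  exists p, 0 < p /\ forall n, w (n + p) = w n.

Definition pref (A : Type) (w : nat -> A) (m : nat) : seq A := mkseq w m.

Definition enum_pal_prefixes (A : eqType) (w : nat -> A) (n : nat -> nat) : Prop :=
  (forall i, n i < n i.+1) /\
  (forall m, is_pal (pref w m) <-> exists i, n i = m).

Definition delta_of (n : nat -> nat) : \bar R :=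
  limn_esup (fun i => ((n i.+1)%:R / (n i)%:R : R)%:E).

(* sigma_n for the characteristic Sturmian word with slope [0; s_1, s_2, ...]
   (s k = s_k, s 0 is unused).  sigma_pair n = (sigma_n, sigma_{n+1}). *)
Fixpoint sigma_pair (A : Type) (a b : A) (s : nat -> nat) (n : nat) : seq A * seq A :=
  match n with
  | 0 => ([:: a], nseq (s 1).-1 a ++ [:: b])
  | k.+1 => let (x, y) := sigma_pair a b s k in
            (y, flatten (nseq (s k.+2) y) ++ x)
  end.

Definition sturm_sigma (A : Type) (a b : A) (s : nat -> nat) (n : nat) : seq A :=
  (sigma_pair a b s n).1.

Definition characteristic_sturmian (A : eqType) (w : nat -> A) : Prop :=
  exists (a b : A) (s : nat -> nat),
    a != b /\ (forall k, 1 <= k -> 0 < s k) /\ word_limit (sturm_sigma a b s) w.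

(* Let [nn k] be the length of the [k]-th palindromic prefix of [w].  Justin's formula
   reads [nn (k+1) = 2 nn k + 1 - (nn j + 1)], where [j < k] is the last occurrence of the
   letter [D k] in the directive word (the bracket being [0] when there is none), and by
   induction the brackets of three distinct letters add up to at most [nn k].  Let [k] be
   the position where a third letter first appears after a large index [N]: the bracket
   of [D k] is at most that of the other letter [z] seen since [N], the bracket of
   [D (k-1)] is [nn (k-1) + 1], and these facts together with [nn (k+1) < sqrt 3 nn k] and
   [nn k < sqrt 3 nn (k-1)] are incompatible because [3 sqrt 3 > 5].  So only two letters
   occur.  Writing [D = a^(e1) b^(e2-e1) a^(e3-e2) ...], Justin's formula makes the
   increments [nn (e k + 1) - nn (e k)] follow the recursion of the lengths of the standard
   words [sigma_k], and the periods forced by consecutive palindromic prefixes show that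
   [sigma_k] is the prefix of [w] of that length. *)

From Stdlib Require Import Rdefinitions.
From mathcomp Require Import all_boot all_order all_algebra.
From mathcomp Require Import all_classical all_reals all_analysis.
From mathcomp Require Import Rstruct Rstruct_topology.
From mathcomp Require Import zify lra.
Import Order.TTheory GRing.Theory Num.Theory.
Set Implicit Arguments.
Unset Strict Implicit.
Unset Printing Implicit Defensive.

(** * Palindromic prefixes of infinite words *)

Lemma pal_cat_rev (A : eqType) (u v : seq A) : is_pal v -> is_pal (u ++ v ++ rev u).
Proof. by move=> /eqP palv; apply/eqP; rewrite !rev_cat revK palv catA. Qed.

Lemma pal_cons_rcons (A : eqType) (x : A) (v : seq A) : is_pal v -> is_pal (x :: rcons v x).
Proof. by move=> /eqP palv; apply/eqP; rewrite rev_cons rev_rcons palv. Qed.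

Lemma eq_pref (A : Type) (v w : nat -> A) n :
  (forall i, i < n -> v i = w i) -> pref v n = pref w n.
Proof. by move=> vw; apply/eq_in_map => i; rewrite mem_iota => /vw. Qed.

Section InfiniteWordPrefixes.
Variables (A : Type) (w : nat -> A).

Lemma size_pref m : size (pref w m) = m.
Proof. exact: size_mkseq. Qed.

Lemma nth_pref x m i : i < m -> nth x (pref w m) i = w i.
Proof. exact: nth_mkseq. Qed.

Lemma pref_rcons m : pref w m.+1 = rcons (pref w m) (w m).
Proof. exact: mkseqS. Qed.

Lemma pref_addn m n : pref w (m + n) = pref w m ++ pref (fun i => w (m + i)) n.
Proof.
rewrite /pref /mkseq iotaD map_cat; congr (_ ++ _).
by rewrite add0n -{1}(addn0 m) iotaDl -map_comp.
Qed.

Lemma pref_periodic p q r :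
  (forall i, i + p < r * p + q -> w (i + p) = w i) ->
  pref w (r * p + q) = flatten (nseq r (pref w p)) ++ pref w q.
Proof.
elim: r => [|r IH] per; first by rewrite mul0n add0n.
rewrite /= -catA -IH; last by move=> i ?; apply: per; lia.
rewrite mulSn -addnA pref_addn; congr (_ ++ _).
by apply: eq_pref => i ?; rewrite addnC per //; lia.
Qed.

End InfiniteWordPrefixes.

Section PalindromicPrefixes.
Variables (A : eqType) (w : nat -> A).

Lemma prefix_pref m n : m <= n -> prefix (pref w m) (pref w n).
Proof. by move=> /subnKC <-; rewrite pref_addn prefix_prefix. Qed.

Lemma palP m : reflect (forall i, i < m -> w (m - i.+1) = w i) (is_pal (pref w m)).
Proof.
apply: (iffP eqP) => [palm i im | palm].
  have := congr1 (nth (w 0) ^~ i) palm.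
  by rewrite nth_rev size_pref // !nth_pref // ltn_subrL (leq_ltn_trans _ im).
apply: (@eq_from_nth _ (w 0)); rewrite size_rev // size_pref => i im.
by rewrite nth_rev size_pref // !nth_pref // ?palm // ltn_subrL (leq_ltn_trans _ im).
Qed.

Lemma pal_pref_period m n : is_pal (pref w m) -> is_pal (pref w n) -> m <= n ->
  forall i, i < m -> w (i + (n - m)) = w i.
Proof.
move=> /palP palm /palP paln mn i im.
rewrite -(palm i im) -(paln (m - i.+1)); last by lia.
congr w; lia.
Qed.

Lemma pal_pref_mirror m n : is_pal (pref w m) -> is_pal (pref w n) -> m < n <= m + m ->
  is_pal (pref w (m + m - n)) /\ w (m + m - n) = w m.
Proof.
move=> palm paln /andP [mn nmm]; have per := pal_pref_period palm paln (ltnW mn).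
move/palP: palm => palm; move/palP: paln => paln; split.
  apply/palP => i i_lt; rewrite -[RHS]per; last by lia.
  by rewrite -palm; [congr w|]; lia.
by rewrite -palm; [rewrite -paln; [congr w|]|]; lia.
Qed.

End PalindromicPrefixes.

Lemma word_limit_pref (A : eqType) (w : nat -> A) (x : nat -> seq A) (f : nat -> nat) :
  (forall k, x k = pref w (f k)) -> (forall k, k < f k) -> word_limit x w.
Proof.
move=> xE f_gt m; exists m => k mk; have m_lt := leq_ltn_trans mk (f_gt k).
by rewrite xE size_pref nth_pref.
Qed.

(** * Justin's formula *)

(* The shift by one makes Justin's
   formula below hold uniformly, whether or not [D k] occurred before. *)
Fixpoint lastpal (A : eqType) (D : nat -> A) (nn : nat -> nat) (x : A) (k : nat) : nat :=
  if k is k'.+1 then if D k' == x then (nn k').+1 else lastpal D nn x k' else 0.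

Definition justin_formula (A : eqType) (D : nat -> A) (nn : nat -> nat) : Prop :=
  forall k, nn k.+1 = (nn k).*2.+1 - lastpal D nn (D k) k.

Section LastPal.
Variables (A : eqType) (D : nat -> A) (nn : nat -> nat).
Local Notation lastpal := (lastpal D nn).

Lemma lastpal_spec x k :
  lastpal x k = 0 \/ exists j, [/\ j < k, D j = x & lastpal x k = (nn j).+1].
Proof.
elim: k => [|k IH] /=; first by left.
case: eqP => [Dk|_]; first by right; exists k.
by case: IH => [->|[j [jk Dj ->]]]; [left | right; exists j; rewrite ltnW].
Qed.

Lemma lastpal_last x j k : j < k -> D j = x -> (forall i, j < i < k -> D i != x) ->
  lastpal x k = (nn j).+1.
Proof.
elim: k => // k IH; rewrite ltnS leq_eqVlt => /orP [/eqP <- /= -> | jk Dj later] /=.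
  by rewrite eqxx.
rewrite (negbTE (later k _)) ?ltnSn ?jk // IH // => i /andP [ji ik].
by apply: later; rewrite ji ltnW.
Qed.

Lemma lastpal_absent x k : (forall i, i < k -> D i != x) -> lastpal x k = 0.
Proof.
move=> absent; case: (lastpal_spec x k) => [//|[j [jk Dj _]]].
by move: (absent j jk); rewrite Dj eqxx.
Qed.

Hypothesis nn_mono : {homo nn : i j / i < j}.

Lemma lastpal_gt x i k : i < k -> D i = x -> nn i < lastpal x k.
Proof.
elim: k => // k IH; rewrite ltnS leq_eqVlt => /orP [/eqP -> /= -> | ik Di] /=.
  by rewrite eqxx.
case: eqP => _; last exact: IH.
by rewrite ltnS ltnW ?nn_mono.
Qed.

Lemma lastpal_le x k : lastpal x k <= nn k.
Proof. by case: (lastpal_spec x k) => [->|[j [jk _ ->]]] //; exact: nn_mono. Qed.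

Lemma lastpal_le_recent x z N i k :
  (forall j, N <= j < k -> D j != x) -> N <= i < k -> D i = z ->
  lastpal x k <= lastpal z k.
Proof.
move=> fresh /andP [Ni ik] Di; case: (lastpal_spec x k) => [->|[j [jk Dj ->]]] //.
have jN : j < N.
  by rewrite ltnNge; apply/negP => Nj; have := fresh j; rewrite Nj jk Dj eqxx => /(_ isT).
exact: ltn_trans (nn_mono (leq_trans jN Ni)) (lastpal_gt ik Di).
Qed.

End LastPal.

Lemma first_exit (A : Type) (D : nat -> A) (S : pred A) N :
  (exists2 n, N <= n & ~~ S (D n)) ->
  exists k, [/\ N <= k, ~~ S (D k) & forall i, N <= i < k -> S (D i)].
Proof.
move=> [n Nn Sn]; have exP : exists n, (N <= n) && ~~ S (D n) by exists n; rewrite Nn.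
case: (ex_minnP exP) => k /andP [Nk Sk] k_min; exists k; split=> // i /andP [Ni ik].
by apply: contraTT ik => Si; rewrite -leqNgt k_min // Ni.
Qed.

Lemma fresh_letter_after (A : eqType) (D : nat -> A) N :
  (forall M p q, exists2 n, M <= n & (D n != p) && (D n != q)) ->
  exists k z, [/\ N <= k, D k.+1 != D k, z != D k.+1, z != D k
                & forall i, N <= i <= k -> D i != D k.+1]
              /\ exists2 i, N <= i <= k & D i = z.
Proof.
move=> avoid.
have [k1 [Nk1 Dk1 before_k1]] : exists k1, [/\ N <= k1, D k1 != D N
    & forall i, N <= i < k1 -> D i == D N].
  apply: (@first_exit _ D (fun c => c == D N)).
  by have [n Nn /andP [Dn _]] := avoid N (D N) (D N); exists n.
pose S c := (c == D N) || (c == D k1).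
have [k [k1k Dk before_k]] : exists k, [/\ k1 <= k, ~~ S (D k)
    & forall i, k1 <= i < k -> S (D i)].
  by apply: first_exit; have [n k1n ?] := avoid k1 (D N) (D k1); exists n; rewrite // negb_or.
have N_k1 : N < k1 by rewrite ltn_neqAle Nk1 andbT; apply: contraNneq Dk1 => ->.
have k1_k : k1 < k.
  by rewrite ltn_neqAle k1k andbT; apply: contraNneq Dk => <-; rewrite /S eqxx orbT.
case: k k1k Dk before_k k1_k => // k k1k Dk before_k k1_k.
have inS i : N <= i <= k -> S (D i).
  case/andP=> Ni ik; case: (ltnP i k1) => [ik1|k1i]; last by rewrite before_k ?k1i.
  by rewrite /S before_k1 ?Ni.
have [z [zk Sz z_occ]] : exists z, [/\ z != D k, S z & exists2 i, N <= i <= k & D i = z].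
  have [kN|kN] := eqVneq (D k) (D N).
    exists (D k1); split; [by rewrite kN | by rewrite /S eqxx orbT | exists k1 => //].
    by rewrite Nk1.
  exists (D N); split; [by rewrite eq_sym | by rewrite /S eqxx | exists N => //].
  by rewrite leqnn (leq_trans (ltnW N_k1)).
exists k, z; split=> //; split=> //; first lia.
- by apply: contraNneq Dk => ->; apply: inS; rewrite leqnn; lia.
- by apply: contraNneq Dk => <-.
- by move=> i /inS; apply: contraTneq => ->.
Qed.

Section Sqrt3.
Local Open Scope ring_scope.

Lemma sqrt3_ratio_contra (R : rcfType) (a p l n : nat) :
  ((l.*2 + p).+1 <= a)%N -> (n + l = a.*2.+1)%N ->
  n%:R < Num.sqrt 3 * a%:R :> R -> a%:R < Num.sqrt 3 * p%:R :> R -> False.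
Proof.
move=> small_l n_def n_lt a_lt; set s := Num.sqrt (3 : R) in n_lt a_lt.
have s_ge0 : 0 <= s := sqrtr_ge0 _.
have ss : s * s = 3 by rewrite -expr2 sqr_sqrtr.
have s_gt : 5 < 3 * s by nra.
move: small_l; rewrite -(ler_nat R) -addn1 !natrD -muln2 natrM => small_l.
move/(congr1 (fun m => m%:R : R)): n_def; rewrite -addn1 !natrD -muln2 natrM => n_def.
have a_ge0 : 0 <= a%:R :> R := ler0n _ _.
have p_lt : p%:R < 2 * s * a%:R - 3 * a%:R - 3 by lra.
have sp_le : s * p%:R <= s * (2 * s * a%:R - 3 * a%:R - 3) by rewrite ler_wpM2l // ltW.
have sa_ge : 5 * a%:R <= 3 * s * a%:R by apply: ler_wpM2r => //; exact: ltW.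
have ssa : s * s * a%:R = 3 * a%:R by rewrite ss.
nra.
Qed.

End Sqrt3.

Section JustinFormula.
Variables (A : eqType) (D : nat -> A) (nn : nat -> nat).
Hypotheses (nn0 : nn 0 = 0) (nn_incr : forall i, nn i < nn i.+1)
  (nn_justin : justin_formula D nn).

Let nn_mono : {homo nn : i j / i < j} := homo_ltn ltn_trans nn_incr.

Lemma justin_repeat m : D m.+1 = D m -> nn m.+2 = (nn m.+1).*2 - nn m.
Proof. by move=> Dm; rewrite nn_justin Dm /= eqxx subSS. Qed.

Lemma lastpal_sum_le x y z k : x != y -> y != z -> z != x ->
  lastpal D nn x k + lastpal D nn y k + lastpal D nn z k <= nn k.
Proof.
move=> xy yz zx; elim: k => [|k IH] /=; first by rewrite nn0.
rewrite nn_justin; have := lastpal_le D nn_mono (D k) k.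
have [Dkx|xk] := eqVneq (D k) x.
  by subst x; rewrite (ifN_eq _ _ xy) (ifN_eqC _ _ zx); lia.
have [Dky|yk] := eqVneq (D k) y.
  by subst y; rewrite (ifN_eq _ _ yz) /=; lia.
have [Dkz|zk] := eqVneq (D k) z.
  by subst z => /=; lia.
by rewrite /=; lia.
Qed.

Lemma justin_ratio_often_ge_sqrt3 (R : rcfType) :
  (forall M p q, exists2 n, M <= n & (D n != p) && (D n != q)) ->
  ~ exists K, forall k, K <= k -> ((nn k.+1)%:R < Num.sqrt 3 * (nn k)%:R :> R)%R.
Proof.
move=> avoid [K ratio].
have [k [z [[Kk xy zx zy fresh] [i Kik Diz]]]] := fresh_letter_after K avoid.
have lx_lz := lastpal_le_recent (k := k.+1) nn_mono fresh Kik Diz.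
have yz : D k != z by rewrite eq_sym.
have := lastpal_sum_le k.+1 xy yz zx; rewrite [lastpal _ _ (D k) _]/= eqxx => sum.
have lx_le := lastpal_le D nn_mono (D k.+1) k.+1.
apply: (sqrt3_ratio_contra (l := lastpal D nn (D k.+1) k.+1) _ _
  (ratio k.+1 (leqW Kk)) (ratio k Kk)); first lia.
by rewrite nn_justin; lia.
Qed.

End JustinFormula.

(** * Standard episturmian words *)

Lemma std_episturmian_pal_prefixes (A : eqType) (D w : nat -> A) :
  std_episturmian D w -> exists nn : nat -> nat, nn 0 = 0 /\
    forall i, is_rpal_closure (rcons (pref w (nn i)) (D i)) (pref w (nn i.+1)).
Proof.
move=> [pi [pi0 [pi_closure pi_lim]]].
have pi_step i : prefix (pi i) (pi i.+1).
  by case: (pi_closure i) => _ [/(prefix_trans (prefix_rcons _ _))].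
have pi_chain i j : i <= j -> prefix (pi i) (pi j).
  move=> /subnKC <-; elim: (j - i) => [|d IH]; first by rewrite addn0 prefix_refl.
  by rewrite addnS (prefix_trans IH).
have piE i : pi i = pref w (size (pi i)).
  apply: (@eq_from_nth _ (w 0)); rewrite ?size_pref // => m m_lt.
  have [N /(_ (maxn N i) (leq_maxl _ _)) [_]] := pi_lim m.
  have /prefixP [t ->] := pi_chain i (maxn N i) (leq_maxr _ _).
  by rewrite nth_cat m_lt nth_pref // => <-; apply: set_nth_default.
exists (fun i => size (pi i)); split; first by rewrite pi0.
by move=> i; rewrite -!piE.
Qed.

Lemma sturm_sigma_unique (A : Type) (a b : A) (s : nat -> nat) (x : nat -> seq A) :
  x 0 = [:: a] -> x 1 = nseq (s 1).-1 a ++ [:: b] ->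
  (forall k, x k.+2 = flatten (nseq (s k.+2) (x k.+1)) ++ x k) ->
  forall k, sturm_sigma a b s k = x k.
Proof.
move=> x0 x1 xSS k; rewrite /sturm_sigma; suff -> : sigma_pair a b s k = (x k, x k.+1) by [].
by elim: k => [|k /= ->]; rewrite ?x0 ?x1 ?xSS.
Qed.

(* With [D = a^(e 1) b^(e 2 - e 1) a^(e 3 - e 2) ...], the slope is
   [[0; e 1 + 1, e 2 - e 1, e 3 - e 2, ...]]. *)
Definition block_slope (e : nat -> nat) (k : nat) : nat :=
  if k is 1 then (e 1).+1 else e k - e k.-1.

Section PalindromicClosureChain.
Variables (A : eqType) (D w : nat -> A) (nn : nat -> nat).
Hypotheses (nn0 : nn 0 = 0)
  (nn_closure : forall i, is_rpal_closure (rcons (pref w (nn i)) (D i)) (pref w (nn i.+1))).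

Lemma closure_prefix i : prefix (rcons (pref w (nn i)) (D i)) (pref w (nn i.+1)).
Proof. by case: (nn_closure i) => _ []. Qed.

Lemma closure_nn_incr i : nn i < nn i.+1.
Proof. by have := size_prefix (closure_prefix i); rewrite size_rcons !size_pref. Qed.

Let nn_mono : {homo nn : i j / i < j} := homo_ltn ltn_trans closure_nn_incr.

Lemma closure_pal i : is_pal (pref w (nn i)).
Proof. by case: i => [|i]; [rewrite nn0 | case: (nn_closure i)]. Qed.

Lemma closure_letter i : w (nn i) = D i.
Proof.
have := prefix_pref w (closure_nn_incr i); rewrite pref_rcons.
move: (closure_prefix i); rewrite !prefixE !size_rcons => /eqP -> /eqP.
by move=> /rcons_inj [->].
Qed.

Lemma closure_min i q : is_pal q -> prefix (pref w (nn i).+1) q -> nn i.+1 <= size q.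
Proof.
rewrite pref_rcons closure_letter => palq prefq.
by case: (nn_closure i) => _ [_ /(_ q palq prefq)]; rewrite size_pref.
Qed.

Lemma closure_nn_ge i : i <= nn i.
Proof. by elim: i => // i IH; exact: leq_ltn_trans IH (closure_nn_incr i). Qed.

Lemma closure_enum : enum_pal_prefixes w nn.
Proof.
split=> [|m]; first exact: closure_nn_incr.
split=> [palm|[i <-]]; last exact: closure_pal.
have ex_gt : exists j, m < nn j by exists m.+1; exact: closure_nn_ge.
case: (ex_minnP ex_gt) => [[|i]]; first by rewrite nn0.
move=> m_lt i_min; exists i; apply/eqP; rewrite eqn_leq.
have -> : nn i <= m by rewrite leqNgt; apply/negP => /i_min; rewrite ltnn.
rewrite leqNgt; apply/negP => lt_m.
by have := closure_min palm (prefix_pref w lt_m); rewrite size_pref leqNgt m_lt.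
Qed.

Lemma closure_pal_suffix k : exists u v,
  [/\ rcons (pref w (nn k)) (D k) = u ++ v, is_pal v & size v = (lastpal D nn (D k) k).+1].
Proof.
case: (lastpal_spec D nn (D k) k) => [->|[j [jk Dj ->]]].
  by exists (pref w (nn k)), [:: D k]; split; [rewrite cats1 | apply/eqP | ].
have : prefix (rcons (pref w (nn j)) (D k)) (pref w (nn k)).
  by rewrite -Dj -closure_letter -pref_rcons prefix_pref // nn_mono.
rewrite -suffix_rev rev_rcons (eqP (closure_pal j)) (eqP (closure_pal k)).
move=> /suffixP [u ->]; exists u, (D k :: rcons (pref w (nn j)) (D k)).
by rewrite rcons_cat pal_cons_rcons ?closure_pal //= size_rcons size_pref.
Qed.

Lemma closure_justin : justin_formula D nn.
Proof.
move=> k; have l_le := lastpal_le D nn_mono (D k) k.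
apply/eqP; rewrite eqn_leq; apply/andP; split.
  have [u [v [uv palv size_v]]] := closure_pal_suffix k.
  have := @closure_min k _ (pal_cat_rev u palv).
  rewrite pref_rcons closure_letter uv catA prefix_prefix !size_cat size_rev => /(_ isT).
  by have := congr1 size uv; rewrite size_rcons size_pref size_cat; lia.
(* A shorter closure would mirror into a palindromic prefix [nn j] followed by [D k],
   with [j] later than the last occurrence of [D k] before [k]. *)
rewrite leqNgt; apply/negP => lt_nn.
have range : nn k < nn k.+1 <= nn k + nn k by rewrite closure_nn_incr /=; lia.
have [pal_m w_m] := pal_pref_mirror (closure_pal k) (closure_pal k.+1) range.
have [j nn_j] := (closure_enum.2 _).1 pal_m.
have jk : j < k by rewrite -(leqW_mono (leq_mono nn_mono)) nn_j; lia.
have Dj : D j = D k by rewrite -!closure_letter nn_j.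
by have := lastpal_gt nn_mono jk Dj; lia.
Qed.

Section BinaryDirective.
Variable e : nat -> nat.
Hypotheses (binary : forall x y z : A, x != y -> y != z -> z = x)
  (e0 : e 0 = 0) (e_incr : forall k, e k < e k.+1)
  (e_block : forall k i, e k <= i < e k.+1 -> D i = D (e k))
  (e_change : forall k, D (e k.+1) != D (e k)).

Local Notation inc m := (nn m.+1 - nn m).
Local Notation len k := (inc (e k)).

Lemma inc_block k m : e k <= m < e k.+1 -> inc m = len k.
Proof.
elim: m => [|m IH] /andP [km mk]; first by move: km; rewrite leqn0 => /eqP ->.
have [-> // | ne_km] := eqVneq (e k) m.+1.
have km' : e k <= m by rewrite -ltnS ltn_neqAle ne_km km.
have Dm : D m.+1 = D m by rewrite !(@e_block k) ?km' ?mk ?(ltnW mk) ?leqW.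
rewrite -IH ?km' ?(ltnW mk) // (justin_repeat closure_justin Dm).
by have := closure_nn_incr m; lia.
Qed.

Lemma nn_block k d : d <= e k.+1 - e k -> nn (e k + d) = nn (e k) + d * len k.
Proof.
elim: d => [|d IH] d_le; first by rewrite addn0 mul0n addn0.
have inc_d : inc (e k + d) = len k by apply: inc_block; lia.
have := closure_nn_incr (e k + d); rewrite addnS mulSn.
by rewrite IH ?(ltnW d_le) in inc_d *; lia.
Qed.

Lemma len0 : len 0 = 1.
Proof. by rewrite e0 closure_justin nn0. Qed.

Lemma nn_first_block m : m <= e 1 -> nn m = m.
Proof.
by move=> m_le; have := @nn_block 0 m; rewrite len0 e0 nn0 muln1 subn0; apply.
Qed.

Lemma len1 : len 1 = (e 1).+1.
Proof.
have := e_change 0; rewrite e0 => new_letter.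
rewrite closure_justin nn_first_block // (@lastpal_absent _ _ _ _ (e 1)) ?subn0; first lia.
by move=> i i_lt; rewrite (@e_block 0) ?e0 // eq_sym.
Qed.

Lemma lastpal_block_end k :
  lastpal D nn (D (e k.+2)) (e k.+2) = (nn (e k.+1).-1).+1.
Proof.
have [e_k e_k1] := (e_incr k, e_incr k.+1).
apply: lastpal_last; first lia.
  rewrite (@e_block k) -?(binary (e_change k.+1) (e_change k)) //; lia.
move=> i i_range; rewrite (@e_block k.+1); first by rewrite eq_sym e_change.
lia.
Qed.

Lemma len_SS k : len k.+2 = nn (e k.+2) - nn (e k.+1).-1.
Proof. by rewrite closure_justin lastpal_block_end; lia. Qed.

Lemma len_rec k : len k.+2 = block_slope e k.+2 * len k.+1 + len k.
Proof.
have [e_k e_k1] := (e_incr k, e_incr k.+1).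
set j := (e k.+1).-1; have jS : j.+1 = e k.+1 by rewrite /j prednK // (leq_ltn_trans _ e_k).
have inc_j : inc j = len k by apply: inc_block; rewrite -ltnS jS e_k -jS ltnSn.
have nn_j := closure_nn_incr j; rewrite jS in inc_j nn_j.
have := nn_block (k := k.+1) (leqnn _); rewrite subnKC ?(ltnW e_k1) //.
rewrite len_SS -/j /block_slope /=; set P := _ * len k.+1 => nn_e.
lia.
Qed.

Lemma pref_len_rec k : pref w (len k.+2) =
  flatten (nseq (block_slope e k.+2) (pref w (len k.+1))) ++ pref w (len k).
Proof.
have e_k1 := e_incr k.+1.
set j := (e k.+2).-1; have jS : j.+1 = e k.+2 by rewrite /j prednK // (leq_ltn_trans _ e_k1).
have inc_j : inc j = len k.+1 by apply: inc_block; rewrite -ltnS jS e_k1 -jS ltnSn.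
have len_le : len k.+2 <= nn (e k.+2) by rewrite len_SS leq_subr.
rewrite len_rec; apply: pref_periodic => i i_lt.
have := pal_pref_period (closure_pal j) (closure_pal j.+1) (ltnW (closure_nn_incr j)).
rewrite inc_j; apply.
by have := closure_nn_incr j; rewrite -len_rec -jS in i_lt len_le; lia.
Qed.

Lemma len_gt k : k < len k.
Proof.
have e1_gt0 : 0 < e 1 by have := e_incr 0; rewrite e0.
suff : k < len k /\ k.+1 < len k.+1 by case.
elim: k => [|k [IH1 IH2]]; first by rewrite len0 len1 ltnS.
split=> //; rewrite len_rec; have : 0 < block_slope e k.+2.
  by rewrite /block_slope /= subn_gt0.
by case: (block_slope e k.+2) => // n _; rewrite mulSn; nia.
Qed.

Lemma sturm_sigma_closure k :
  sturm_sigma (D 0) (D (e 1)) (block_slope e) k = pref w (len k).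
Proof.
apply: (sturm_sigma_unique (x := fun k => pref w (len k))) => [|| {}k].
- by have := closure_letter 0; rewrite nn0 len0 => <-.
- have first_block : pref w (e 1) = nseq (e 1) (D 0).
    apply: (@eq_from_nth _ (D 0)); rewrite ?size_pref ?size_nseq // => i i_lt.
    rewrite nth_pref // nth_nseq i_lt -(nn_first_block (ltnW i_lt)) closure_letter.
    by rewrite (@e_block 0) e0.
  by rewrite len1 pref_rcons first_block cats1 -{2}(nn_first_block (leqnn _)) closure_letter.
- exact: pref_len_rec.
Qed.

Lemma closure_binary_sturmian : characteristic_sturmian w.
Proof.
exists (D 0), (D (e 1)), (block_slope e); split; first by rewrite eq_sym -{2}e0 e_change.
split; last exact: word_limit_pref sturm_sigma_closure len_gt.
by case=> // [[_|k _]]; rewrite /block_slope //= subn_gt0.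
Qed.

End BinaryDirective.

End PalindromicClosureChain.

Lemma incr_subrange_le (f g : nat -> nat) :
  (forall i, f i < f i.+1) -> (forall i, g i < g i.+1) -> (forall i, exists j, g j = f i) ->
  forall i, g i <= f i.
Proof.
move=> f_incr g_incr f_in_g i; have g_le := leq_mono (homo_ltn ltn_trans g_incr).
suff [j ij <-] : exists2 j, i <= j & g j = f i by rewrite g_le.
elim: i => [|i [j ij gj]]; first by have [j gj] := f_in_g 0; exists j.
have [j' gj'] := f_in_g i.+1; exists j' => //.
by rewrite (leq_ltn_trans ij) // -(leqW_mono g_le) gj gj'.
Qed.

Lemma enum_pal_prefixes_unique (A : eqType) (w : nat -> A) (n n' : nat -> nat) :
  enum_pal_prefixes w n -> enum_pal_prefixes w n' -> n =1 n'.
Proof.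
move=> [n_incr n_enum] [n'_incr n'_enum] i; apply/eqP; rewrite eqn_leq.
rewrite !incr_subrange_le // => j.
  by apply/(n'_enum _)/(n_enum _); exists j.
by apply/(n_enum _)/(n'_enum _); exists j.
Qed.

Lemma limn_esup_lt (R : realType) (u : (\bar R)^nat) (l : \bar R) :
  (limn_esup u < l)%E -> \forall k \near \oo%classic, (u k < l)%E.
Proof.
rewrite /limn_esup limf_esupE => /ereal_inf_lt [_ [V oo_V <-]] sup_lt.
apply: filterS oo_V => k Vk; apply: le_lt_trans sup_lt.
by apply: ereal_sup_ubound; exists k.
Qed.

Lemma delta_lt_ratio (n : nat -> nat) (l : R) : (forall i, n i < n i.+1) ->
  (delta_of n < l%:E)%E -> exists K, forall k, K <= k -> ((n k.+1)%:R < l * (n k)%:R)%R.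
Proof.
move=> n_incr /limn_esup_lt [N _ ratio]; exists N.+1 => k Nk.
have n_gt0 : (0 < (n k)%:R :> R)%R.
  rewrite ltr0n (leq_ltn_trans (leq0n (n 0))) //.
  exact: homo_ltn ltn_trans n_incr _ _ (leq_trans (ltn0Sn N) Nk).
by rewrite -ltr_pdivrMr // -lte_fin; apply: ratio; exact: ltnW.
Qed.

Lemma directive_blocks (A : eqType) (D : nat -> A) :
  (forall m, exists i, (m < i) && (D i != D m)) ->
  exists e : nat -> nat, [/\ e 0 = 0, forall k, e k < e k.+1,
    forall k i, e k <= i < e k.+1 -> D i = D (e k) & forall k, D (e k.+1) != D (e k)].
Proof.
move=> change; pose next m := ex_minn (change m).
have next_spec m : [/\ m < next m, D (next m) != D m
    & forall i, m <= i < next m -> D i = D m].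
  rewrite /next; case: ex_minnP => n /andP [mn Dn] n_min; split=> // i /andP [mi i_lt].
  apply/eqP; apply: contraTT i_lt => Di; rewrite -leqNgt n_min // Di andbT.
  by rewrite ltn_neqAle mi andbT; apply: contraNneq Di => ->.
by exists (fun k => iter k next 0); split=> // k; case: (next_spec (iter k next 0)).
Qed.

Section FiniteAlphabet.
Variables (A : finType) (D : nat -> A).
Hypothesis strict : strict_directive D.

Lemma strict_avoid_pair (x y z : A) : x != y -> y != z -> z != x ->
  forall M p q, exists2 n, M <= n & (D n != p) && (D n != q).
Proof.
move=> xy yz zx M p q; have [c cpq] : exists c, (c != p) && (c != q).
  case/boolP: ((x != p) && (x != q)) => [|xpq]; first by exists x.
  case/boolP: ((y != p) && (y != q)) => [|ypq]; first by exists y.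
  exists z; move: xpq ypq xy yz zx; rewrite !negb_and !negbK.
  by case/orP=> /eqP <- /orP [] /eqP <-; rewrite ?eqxx // => _ yz zx; rewrite zx eq_sym yz.
by have [n [Mn Dn]] := strict c M; exists n; rewrite ?Dn.
Qed.

Lemma strict_change : 1 < #|A| -> forall m, exists i, (m < i) && (D i != D m).
Proof.
move=> /card_gt1P [x [y [_ _ xy]]] m; have [c cDm] : exists c, c != D m.
  by case: (eqVneq x (D m)) => [<-|]; [exists y; rewrite eq_sym | exists x].
by have [i [mi Di]] := strict c m.+1; exists i; rewrite mi Di.
Qed.

End FiniteAlphabet.

Lemma card_le2_binary (A : finType) : #|A| <= 2 ->
  forall x y z : A, x != y -> y != z -> z = x.
Proof.
move=> le2 x y z xy yz; apply/eqP; apply: contraTT le2 => zx.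
by rewrite -ltnNge; apply/card_gt2P; exists x, y, z.
Qed.

Theorem corollary7p4 (A : finType) (D : nat -> A) (w : nat -> A) :
  std_episturmian D w ->
  strict_directive D ->
  ~ periodic_word w ->
  (exists n : nat -> nat,
      enum_pal_prefixes w n /\ (delta_of n < (Num.sqrt (3 : R))%:E)%E) ->
  #|A| = 2 /\ characteristic_sturmian w.
Proof.
move=> /std_episturmian_pal_prefixes [nn [nn0 nn_closure]] strict aperiodic.
move=> [n [n_enum delta_lt]].
have n_nn := enum_pal_prefixes_unique n_enum (closure_enum nn0 nn_closure).
have [K ratio] := delta_lt_ratio n_enum.1 delta_lt.
have card_le2 : #|A| <= 2.
  rewrite leqNgt; apply/negP => /card_gt2P [x [y [z [_ [xy yz zx]]]]].
  apply: (justin_ratio_often_ge_sqrt3 (R := R) nn0 (closure_nn_incr nn_closure)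
    (closure_justin nn0 nn_closure) (strict_avoid_pair strict xy yz zx)).
  have sqrt3E : (3 : R) = (3%:R)%R by rewrite IZRposE INRE.
  by exists K => k Kk; rewrite -!n_nn; move: (ratio k Kk); rewrite sqrt3E.
have card_gt1 : 1 < #|A|.
  rewrite ltnNge; apply/negP => /fintype_le1P const; apply: aperiodic.
  by exists 1; split=> // m; rewrite (const (w 0) (w (m + 1))) (const (w 0) (w m)).
split; first by apply/eqP; rewrite eqn_leq card_le2.
have [e [e0 e_incr e_block e_change]] := directive_blocks (strict_change strict card_gt1).
exact: (closure_binary_sturmian nn0 nn_closure (@card_le2_binary _ card_le2)
  e0 e_incr e_block e_change).
Qed.
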